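(* Let $(a_m)_{m\ge0}$ and $(b_n)_{n\ge0}$ be real sequences and let $f(x)=e^{-x/2}\sum_{m=0}^\infty a_mL_m(x)$, $g(x)=e^{-x/2}\sum_{n=0}^\infty b_nL_n(x)$ for $x\in[0,\infty)$, and $h(x)=\int_0^x f(x-t)g(t)\,\mathrm{d}t$. Computing the convolution termwise, $h(x)=e^{-x/2}\sum_{k=0}^\infty c_kL_k(x)$ with $\underline c=R^L\underline b$, where $R^L$ is the infinite matrix with entries $$R^L_{k,n}=a_{k-n}-a_{k-n-1}\qquad(k,n\ge0),\quad a_j:=0\text{ for }j<0,$$ i.e. $R^L$ is the lower triangular Toeplitz matrix with first column $(a_0,a_1,a_2,\dots)^T$ minus the same matrix shifted down by one row (first column $(0,a_0,a_1,\dots)^T$).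
   Context: $L_n$ denotes the Laguerre polynomial of degree $n$, $L_n(x)=\sum_{j=0}^n\binom{n}{j}\frac{(-x)^j}{j!}$; $e^{-x/2}L_n(x)$ are the weighted Laguerre functions. $\underline b=(b_0,b_1,\dots)^T$, $\underline c=(c_0,c_1,\dots)^T$. *)

From Stdlib Require Import Reals ZArith.
From Coquelicot Require Import Coquelicot.
Open Scope R_scope.

Definition Laguerre (n : nat) (x : R) : R :=
  sum_f_R0 (fun j => Binomial.C n j * (- x) ^ j / INR (fact j)) n.

Definition ext0 (a : nat -> R) (j : Z) : R :=
  if (j <? 0)%Z then 0 else a (Z.to_nat j).

Definition RL (a : nat -> R) (k n : nat) : R :=
  ext0 a (Z.of_nat k - Z.of_nat n)%Z - ext0 a (Z.of_nat k - Z.of_nat n - 1)%Z.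

Definition wLag (a : nat -> R) (x : R) : R :=
  exp (- x / 2) * Series (fun m => a m * Laguerre m x).

Definition RLmul (a b : nat -> R) (k : nat) : R :=
  Series (fun n => RL a k n * b n).

From Stdlib Require Import Reals Lra Lia ZArith.
From Coquelicot Require Import Coquelicot.
Open Scope R_scope.

(* Write P_k := L_k - L_(k+1). Since P_k' = L_k and P_k(0) = 0, moving one
   derivative across the convolution gives (L_(m+1) * L_n) = (L_m * L_(n+1)),
   hence the convolution identity
     int_0^x L_m(x-t) L_n(t) dt = P_(m+n)(x).
   Integrating termwise, h(x) = e^(-x/2) sum_n b_n sum_m a_m P_(m+n)(x).
   Summation by parts in m turns the inner sum into
   sum_j (a_j - a_(j-1)) L_(j+n)(x), and regrouping along the diagonals j + n = k
   yields the coefficients c = R^L b. Every interchange of limits rests on the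
   absolute summability of a and b and on the uniform bound |L_n(t)| <= e^t for
   t >= 0, which holds because e^(-2t) (n L_n^2 + t L_n'^2) is nonincreasing along
   Laguerre's equation t y'' + (1 - t) y' + n y = 0. *)

Definition negpow_fact (j : nat) (t : R) : R := (- t) ^ j / INR (fact j).

Lemma negpow_fact_0 t : negpow_fact 0 t = 1.
Proof. unfold negpow_fact; simpl; field. Qed.

Lemma negpow_fact_S_at_0 j : negpow_fact (S j) 0 = 0.
Proof. unfold negpow_fact; simpl; rewrite Ropp_0, Rmult_0_l; apply Rdiv_0_l. Qed.

Lemma is_derive_negpow_fact_S j t :
  is_derive (negpow_fact (S j)) t (- negpow_fact j t).
Proof.
  unfold negpow_fact. auto_derive; [exact I |].
  change (match j with 0%nat => 1 | S _ => INR j + 1 end) with (INR (S j)).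
  change (fact j + j * fact j)%nat with (fact (S j)).
  rewrite fact_simpl, mult_INR.
  assert (INR (fact j) <> 0) by apply INR_fact_neq_0.
  assert (INR (S j) <> 0) by (apply not_0_INR; lia).
  field; auto.
Qed.

Lemma mul_negpow_fact j t : t * negpow_fact j t = - INR (S j) * negpow_fact (S j) t.
Proof.
  unfold negpow_fact. rewrite fact_simpl, mult_INR.
  assert (INR (fact j) <> 0) by apply INR_fact_neq_0.
  assert (INR (S j) <> 0) by (apply not_0_INR; lia).
  simpl pow. field; auto.
Qed.

Definition negpow_poly (c : nat -> R) (N : nat) (t : R) : R :=
  sum_f_R0 (fun j => c j * negpow_fact j t) N.

Lemma is_derive_sum_f_R0 (f : nat -> R -> R) (df : nat -> R) N t :
  (forall j, (j <= N)%nat -> is_derive (f j) t (df j)) ->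
  is_derive (fun s => sum_f_R0 (fun j => f j s) N) t (sum_f_R0 df N).
Proof.
  intros Hf. rewrite <- sum_n_Reals.
  apply is_derive_ext with (fun s => sum_n (fun j => f j s) N).
  - intros s. apply sum_n_Reals.
  - exact (is_derive_sum_n f N t df Hf).
Qed.

Lemma is_derive_negpow_poly c N t :
  is_derive (negpow_poly c (S N)) t (- negpow_poly (fun j => c (S j)) N t).
Proof.
  apply is_derive_ext with
    (fun s => c 0%nat + sum_f_R0 (fun j => c (S j) * negpow_fact (S j) s) N).
  - intros s. unfold negpow_poly. rewrite (decomp_sum _ (S N)) by lia.
    rewrite negpow_fact_0, Rmult_1_r. reflexivity.
  - replace (- negpow_poly (fun j => c (S j)) N t)
      with (0 + sum_f_R0 (fun j => c (S j) * - negpow_fact j t) N).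
    2:{ unfold negpow_poly. rewrite (sum_eq _ (fun j => c (S j) * negpow_fact j t * -1))
          by (intros; ring).
        rewrite <- scal_sum. ring. }
    apply (is_derive_plus (fun _ => c 0%nat)); [exact (is_derive_const (c 0%nat) t) |].
    apply is_derive_sum_f_R0. intros j _.
    apply (is_derive_scal (negpow_fact (S j))), is_derive_negpow_fact_S.
Qed.

Lemma negpow_poly_extend c n N t :
  (forall j, (n < j)%nat -> c j = 0) -> (n <= N)%nat -> negpow_poly c N t = negpow_poly c n t.
Proof.
  intros Hc HN. induction HN as [| N HN IH]; [reflexivity |].
  unfold negpow_poly in *; simpl. rewrite IH, Hc by lia. ring.
Qed.

(* [Binomial.C n j] does not vanish for [j > n] (the subtraction [n - j] truncates). *)
Definition lcoef (n j : nat) : R := if (j <=? n)%nat then Binomial.C n j else 0.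

Lemma lcoef_0 n : lcoef n 0 = 1.
Proof.
  unfold lcoef, Binomial.C; simpl. rewrite Nat.sub_0_r.
  field. apply INR_fact_neq_0.
Qed.

Lemma lcoef_gt n j : (n < j)%nat -> lcoef n j = 0.
Proof. intros H. unfold lcoef. destruct (Nat.leb_spec j n); [lia | reflexivity]. Qed.

Lemma lcoef_pascal n j : lcoef (S n) (S j) = lcoef n j + lcoef n (S j).
Proof.
  unfold lcoef.
  destruct (Nat.leb_spec (S j) (S n)), (Nat.leb_spec j n), (Nat.leb_spec (S j) n);
    try lia.
  - symmetry. apply pascal. lia.
  - replace j with n by lia. unfold Binomial.C. rewrite !Nat.sub_diag.
    change (INR (fact 0)) with 1. rewrite !Rmult_1_r, !Rdiv_diag by apply INR_fact_neq_0.
    ring.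
  - ring.
Qed.

Lemma lcoef_absorb n j : INR (S j) * lcoef (S n) (S j) = INR (S n) * lcoef n j.
Proof.
  unfold lcoef.
  destruct (Nat.leb_spec (S j) (S n)), (Nat.leb_spec j n); try lia; [| ring].
  unfold Binomial.C. replace (S n - S j)%nat with (n - j)%nat by lia.
  rewrite !fact_simpl, !mult_INR.
  assert (INR (fact j) <> 0) by apply INR_fact_neq_0.
  assert (INR (fact (n - j)) <> 0) by apply INR_fact_neq_0.
  assert (INR (S j) <> 0) by (apply not_0_INR; lia).
  field. auto.
Qed.

Lemma Laguerre_negpow_poly n N t : (n <= N)%nat -> Laguerre n t = negpow_poly (lcoef n) N t.
Proof.
  intros HN. rewrite (negpow_poly_extend _ n N) by (auto; intros; apply lcoef_gt; lia).
  apply sum_eq. intros j Hj. unfold lcoef, negpow_fact.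
  destruct (Nat.leb_spec j n); [| lia]. unfold Rdiv. ring.
Qed.

Lemma Laguerre_at_0 n : Laguerre n 0 = 1.
Proof.
  rewrite (Laguerre_negpow_poly n n) by lia. unfold negpow_poly.
  destruct n as [| n]; [simpl; rewrite lcoef_0, negpow_fact_0; ring |].
  rewrite decomp_sum by lia. simpl pred.
  rewrite (sum_eq _ (fun _ => 0)) by (intros; rewrite negpow_fact_S_at_0; ring).
  rewrite sum_cte, lcoef_0, negpow_fact_0. ring.
Qed.

Lemma Laguerre_O t : Laguerre 0 t = 1.
Proof. unfold Laguerre; simpl. unfold Binomial.C; simpl. field. Qed.

Definition dLaguerre (n : nat) (t : R) : R := - negpow_poly (fun j => lcoef n (S j)) n t.

Lemma is_derive_Laguerre n t : is_derive (Laguerre n) t (dLaguerre n t).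
Proof.
  apply is_derive_ext with (negpow_poly (lcoef n) (S n)).
  - intros s. symmetry. apply Laguerre_negpow_poly. lia.
  - apply is_derive_negpow_poly.
Qed.

Lemma continuous_Laguerre n t : continuous (Laguerre n) t.
Proof. apply (ex_derive_continuous (Laguerre n)). eexists. apply is_derive_Laguerre. Qed.

Lemma ex_derive_dLaguerre_succ n t : ex_derive (dLaguerre (S n)) t.
Proof. apply (ex_derive_opp (negpow_poly _ (S n))). eexists. apply is_derive_negpow_poly. Qed.

Lemma dLaguerre_succ n t : dLaguerre (S n) t = dLaguerre n t - Laguerre n t.
Proof.
  unfold dLaguerre. rewrite (Laguerre_negpow_poly n (S n)) by lia.
  rewrite <- (negpow_poly_extend (fun j => lcoef n (S j)) n (S n))
    by (auto; intros; apply lcoef_gt; lia).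
  unfold negpow_poly. rewrite (sum_eq _ (fun j => lcoef n j * negpow_fact j t
                                        + lcoef n (S j) * negpow_fact j t))
    by (intros; rewrite lcoef_pascal; ring).
  rewrite plus_sum. ring.
Qed.

Lemma Laguerre_succ_sub n t :
  Laguerre (S n) t - Laguerre n t = sum_f_R0 (fun j => lcoef n j * negpow_fact (S j) t) n.
Proof.
  rewrite (Laguerre_negpow_poly n (S n)), (Laguerre_negpow_poly (S n) (S n)) by lia.
  unfold negpow_poly. rewrite <- minus_sum, (decomp_sum _ (S n)) by lia. simpl pred.
  rewrite !lcoef_0, Rminus_diag, Rplus_0_l.
  apply sum_eq. intros j _. rewrite lcoef_pascal. ring.
Qed.

Lemma mul_dLaguerre_succ n t :
  t * dLaguerre (S n) t = INR (S n) * (Laguerre (S n) t - Laguerre n t).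
Proof.
  rewrite Laguerre_succ_sub. unfold dLaguerre, negpow_poly.
  rewrite Ropp_mult_distr_r_reverse, scal_sum.
  rewrite (sum_eq _ (fun j => lcoef n j * negpow_fact (S j) t * - INR (S n))).
  2:{ intros j _. rewrite Rmult_assoc, (Rmult_comm _ t), mul_negpow_fact.
      replace (lcoef (S n) (S j) * (- INR (S j) * negpow_fact (S j) t))
        with (- (INR (S j) * lcoef (S n) (S j)) * negpow_fact (S j) t) by ring.
      rewrite lcoef_absorb. ring. }
  rewrite tech5, (lcoef_gt n (S n)), <- scal_sum by lia. ring.
Qed.

Lemma Laguerre_ode n t :
  t * Derive (dLaguerre (S n)) t + (1 - t) * dLaguerre (S n) t
    + INR (S n) * Laguerre (S n) t = 0.
Proof.
  set (w := Derive (dLaguerre (S n)) t).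
  assert (Hlhs : is_derive (fun s => s * dLaguerre (S n) s) t
                   (dLaguerre (S n) t + t * w)).
  { auto_derive; [apply ex_derive_dLaguerre_succ |]. rewrite !Rmult_1_l. reflexivity. }
  assert (Hrhs : is_derive (fun s => s * dLaguerre (S n) s) t
                   (INR (S n) * (dLaguerre (S n) t - dLaguerre n t))).
  { apply is_derive_ext with (fun s => INR (S n) * (Laguerre (S n) s - Laguerre n s)).
    - intros s. symmetry. apply mul_dLaguerre_succ.
    - apply (is_derive_scal (fun s => Laguerre (S n) s - Laguerre n s)).
      apply (is_derive_minus (Laguerre (S n))); apply is_derive_Laguerre. }
  apply is_derive_unique in Hlhs. apply is_derive_unique in Hrhs.
  rewrite Hlhs in Hrhs.
  replace (dLaguerre (S n) t - dLaguerre n t) with (- Laguerre n t) in Hrhs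
    by (rewrite dLaguerre_succ; ring).
  assert (Ht := mul_dLaguerre_succ n t).
  lra.
Qed.

Lemma Laguerre_ode_solution_bound (y z w : R -> R) (N t : R) :
  0 < N -> 0 <= t ->
  (forall s, is_derive y s (z s)) -> (forall s, is_derive z s (w s)) ->
  (forall s, s * w s + (1 - s) * z s + N * y s = 0) ->
  Rabs (y t) <= exp t * Rabs (y 0).
Proof.
  intros HN Ht Hy Hz Hode.
  set (E := fun s => exp (-2 * s) * (N * y s ^ 2 + s * z s ^ 2)).
  assert (HE : forall s, is_derive E s (- exp (-2 * s) * (2 * N * y s ^ 2 + z s ^ 2))).
  { intros s. unfold E. auto_derive.
    - split; [eexists; apply Hy | split; [eexists; apply Hz | exact I]].
    - replace (Derive (fun x => y x) s) with (z s) by (symmetry; apply is_derive_unique, Hy).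
      replace (Derive (fun x => z x) s) with (w s) by (symmetry; apply is_derive_unique, Hz).
      assert (H := f_equal (fun v => 2 * exp (-2 * s) * z s * v) (Hode s)).
      simpl in H. lra. }
  assert (Hdecr : E t <= E 0).
  { destruct (MVT_gen E 0 t _ (fun s _ => HE s)) as [c [_ Hc]].
    - intros s _. apply continuity_pt_filterlim, (ex_derive_continuous E).
      eexists; apply HE.
    - assert (0 <= exp (-2 * c) * (2 * N * y c ^ 2 + z c ^ 2))
        by (apply Rmult_le_pos; [apply Rlt_le, exp_pos | nra]).
      nra. }
  unfold E in Hdecr. rewrite Rmult_0_r, Rmult_0_l, exp_0, Rplus_0_r, Rmult_1_l in Hdecr.
  assert (Hexp : exp (-2 * t) * (exp t * exp t) = 1)
    by (rewrite <- !exp_plus, <- exp_0; f_equal; ring).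
  assert (Hyt : y t ^ 2 <= (exp t * Rabs (y 0)) ^ 2).
  { rewrite Rpow_mult_distr, pow2_abs.
    assert (0 <= t * z t ^ 2) by (apply Rmult_le_pos; nra).
    assert (0 < exp (-2 * t)) by apply exp_pos.
    assert (exp (-2 * t) * y t ^ 2 <= y 0 ^ 2) by nra.
    nra. }
  rewrite <- (Rabs_pos_eq (exp t * Rabs (y 0)))
    by (apply Rmult_le_pos; [apply Rlt_le, exp_pos | apply Rabs_pos]).
  apply Rsqr_le_abs_0. unfold Rsqr. nra.
Qed.

Lemma Laguerre_bound n t : 0 <= t -> Rabs (Laguerre n t) <= exp t.
Proof.
  intros Ht. destruct n as [| n].
  - rewrite Laguerre_O, Rabs_R1. pose proof (exp_ineq1_le t). lra.
  - rewrite <- (Rmult_1_r (exp t)), <- Rabs_R1, <- (Laguerre_at_0 (S n)).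
    apply (Laguerre_ode_solution_bound _ (dLaguerre (S n)) (Derive (dLaguerre (S n)))
             (INR (S n)));
      auto.
    + apply lt_0_INR. lia.
    + apply is_derive_Laguerre.
    + intros s. apply Derive_correct, ex_derive_dLaguerre_succ.
    + apply Laguerre_ode.
Qed.

Lemma Laguerre_bound_le n t x : 0 <= t <= x -> Rabs (Laguerre n t) <= exp x.
Proof.
  intros Ht. apply Rle_trans with (exp t); [apply Laguerre_bound; lra |].
  destruct (Req_dec t x) as [-> | Hne]; [lra |]. apply Rlt_le, exp_increasing. lra.
Qed.

Lemma continuous_reflect (f : R -> R) x t :
  (forall s, continuous f s) -> continuous (fun s => f (x - s)) t.
Proof.
  intros Hf. apply (continuous_comp (fun s => x - s) f); [| apply Hf].
  apply (continuous_minus (fun _ => x) (fun s => s));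
    [apply continuous_const | apply continuous_id].
Qed.

Lemma continuous_conv_integrand (f g : R -> R) x t :
  (forall s, continuous f s) -> (forall s, continuous g s) ->
  continuous (fun s => f (x - s) * g s) t.
Proof.
  intros Hf Hg. apply (continuous_mult (fun s => f (x - s)) g);
    [apply continuous_reflect, Hf | apply Hg].
Qed.

Lemma ex_RInt_conv (f g : R -> R) x :
  (forall s, continuous f s) -> (forall s, continuous g s) ->
  ex_RInt (fun t => f (x - t) * g t) 0 x.
Proof.
  intros Hf Hg. apply (ex_RInt_continuous (V := R_CompleteNormedModule)). intros t _.
  apply continuous_conv_integrand; assumption.
Qed.

Lemma RInt_Rminus (f g : R -> R) a b :
  ex_RInt f a b -> ex_RInt g a b ->
  RInt (fun t => f t - g t) a b = RInt f a b - RInt g a b.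
Proof. exact (RInt_minus (V := R_CompleteNormedModule) f g a b). Qed.

Lemma RInt_conv_swap (P p Q q : R -> R) x :
  (forall t, is_derive P t (p t)) -> (forall t, is_derive Q t (q t)) ->
  (forall t, continuous p t) -> (forall t, continuous q t) ->
  P 0 = 0 -> Q 0 = 0 ->
  RInt (fun t => P (x - t) * q t) 0 x = RInt (fun t => p (x - t) * Q t) 0 x.
Proof.
  intros HP HQ Hp Hq HP0 HQ0.
  assert (HPc : forall t, continuous P t)
    by (intros t; apply (ex_derive_continuous P); eexists; apply HP).
  assert (HQc : forall t, continuous Q t)
    by (intros t; apply (ex_derive_continuous Q); eexists; apply HQ).
  assert (HF : is_RInt (fun t => P (x - t) * q t - p (x - t) * Q t) 0 x
                 (P (x - x) * Q x - P (x - 0) * Q 0)).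
  { apply (is_RInt_derive (fun t => P (x - t) * Q t)).
    - intros t _. auto_derive.
      + split; [eexists; apply HP | split; [eexists; apply HQ | exact I]].
      + replace (Derive (fun s => P s) (x + - t)) with (p (x - t))
          by (symmetry; apply is_derive_unique, HP).
        replace (Derive (fun s => Q s) t) with (q t)
          by (symmetry; apply is_derive_unique, HQ).
        unfold Rminus; ring.
    - intros t _.
      apply (continuous_minus (fun t => P (x - t) * q t) (fun t => p (x - t) * Q t));
        apply continuous_conv_integrand; assumption. }
  replace (P (x - x) * Q x - P (x - 0) * Q 0) with 0 in HF
    by (rewrite Rminus_diag, HP0, HQ0; ring).
  apply (is_RInt_unique (V := R_CompleteNormedModule)) in HF.
  rewrite RInt_Rminus in HF by (apply ex_RInt_conv; assumption).
  lra.
Qed.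

Lemma is_derive_Laguerre_sub_succ n t :
  is_derive (fun s => Laguerre n s - Laguerre (S n) s) t (Laguerre n t).
Proof.
  replace (Laguerre n t) with (dLaguerre n t - dLaguerre (S n) t)
    by (rewrite dLaguerre_succ; ring).
  apply (is_derive_minus (Laguerre n)); apply is_derive_Laguerre.
Qed.

Lemma Laguerre_sub_succ_at_0 n : Laguerre n 0 - Laguerre (S n) 0 = 0.
Proof. rewrite !Laguerre_at_0. ring. Qed.

Lemma continuous_Laguerre_sub_succ n t :
  continuous (fun s => Laguerre n s - Laguerre (S n) s) t.
Proof.
  apply (ex_derive_continuous (fun s => _ - _)).
  eexists. apply is_derive_Laguerre_sub_succ.
Qed.

Lemma RInt_Laguerre_conv m n x :
  RInt (fun t => Laguerre m (x - t) * Laguerre n t) 0 x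
    = Laguerre (m + n) x - Laguerre (S (m + n)) x.
Proof.
  revert n. induction m as [| m IH]; intros n.
  - rewrite (RInt_ext _ (Laguerre n)) by (intros; rewrite Laguerre_O; apply Rmult_1_l).
    apply (is_RInt_unique (V := R_CompleteNormedModule)).
    replace (Laguerre (0 + n) x - Laguerre (S (0 + n)) x)
      with (minus (Laguerre n x - Laguerre (S n) x) (Laguerre n 0 - Laguerre (S n) 0))
      by (rewrite Laguerre_sub_succ_at_0; unfold minus, plus, opp; simpl; ring).
    apply (is_RInt_derive (fun s => Laguerre n s - Laguerre (S n) s)).
    + intros t _. apply is_derive_Laguerre_sub_succ.
    + intros t _. apply continuous_Laguerre.
  - (* L_(m+1) = L_m - P_m, and the swap turns P_m * L_n into L_m * P_n. *)
    assert (Hswap := RInt_conv_swap _ _ _ _ x (is_derive_Laguerre_sub_succ m)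
                       (is_derive_Laguerre_sub_succ n) (continuous_Laguerre m)
                       (continuous_Laguerre n) (Laguerre_sub_succ_at_0 m)
                       (Laguerre_sub_succ_at_0 n)).
    cbv beta in Hswap.
    assert (E : forall k l, ex_RInt (fun t => Laguerre k (x - t) * Laguerre l t) 0 x)
      by (intros; apply ex_RInt_conv; apply continuous_Laguerre).
    assert (EP : ex_RInt (fun t => (Laguerre m (x - t) - Laguerre (S m) (x - t))
                                   * Laguerre n t) 0 x)
      by (apply (ex_RInt_conv (fun s => Laguerre m s - Laguerre (S m) s));
          [apply continuous_Laguerre_sub_succ | apply continuous_Laguerre]).
    rewrite (RInt_ext _ (fun t => Laguerre m (x - t) * Laguerre n t
                         - (Laguerre m (x - t) - Laguerre (S m) (x - t)) * Laguerre n t))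
      by (intros; simpl; ring).
    rewrite (RInt_Rminus _ _ 0 x (E m n) EP), Hswap.
    rewrite (RInt_ext (fun t => Laguerre m (x - t) * (Laguerre n t - Laguerre (S n) t))
               (fun t => Laguerre m (x - t) * Laguerre n t
                         - Laguerre m (x - t) * Laguerre (S n) t))
      by (intros; simpl; ring).
    rewrite (RInt_Rminus _ _ 0 x (E m n) (E m (S n))), !IH, Nat.add_succ_r.
    simpl; ring.
Qed.

Lemma ex_series_Rabs_le (u v : nat -> R) :
  (forall n, Rabs (u n) <= v n) -> ex_series v -> ex_series (fun n => Rabs (u n)).
Proof.
  intros Huv. apply (ex_series_le (fun n => Rabs (u n))).
  intros n. change (Rabs (Rabs (u n)) <= v n). rewrite Rabs_Rabsolu. apply Huv.
Qed.

Lemma ex_series_Rabs_mul_bounded (c f : nat -> R) B :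
  ex_series (fun n => Rabs (c n)) -> (forall n, Rabs (f n) <= B) ->
  ex_series (fun n => Rabs (c n * f n)).
Proof.
  intros Hc Hf. apply ex_series_Rabs_le with (fun n => Rabs (c n) * B).
  - intros n. rewrite Rabs_mult. apply Rmult_le_compat_l; [apply Rabs_pos | apply Hf].
  - apply ex_series_scal_r, Hc.
Qed.

Lemma Rabs_Series_sub_sum_le (u v : nat -> R) N :
  (forall n, Rabs (u n) <= v n) -> ex_series v ->
  Rabs (Series u - sum_f_R0 u N) <= Series v - sum_f_R0 v N.
Proof.
  intros Huv Hv. assert (Hu := ex_series_Rabs_le u v Huv Hv).
  rewrite (Series_incr_n u (S N)), (Series_incr_n v (S N)) by (auto using ex_series_Rabs; lia).
  simpl pred. rewrite !Rplus_minus_l.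
  eapply Rle_trans; [apply Series_Rabs | apply Series_le].
  - apply (ex_series_incr_n (fun n => Rabs (u n))), Hu.
  - intros k. split; [apply Rabs_pos | apply Huv].
  - apply (ex_series_incr_n v), Hv.
Qed.

Lemma filterlim_sum_n_uniform (c : nat -> R) (g : nat -> R -> R) M :
  ex_series (fun m => Rabs (c m)) -> (forall m t, Rabs (g m t) <= M) ->
  filterlim (fun N t => sum_n (fun m => c m * g m t) N) eventually
    (locally (fun t => Series (fun m => c m * g m t))).
Proof.
  intros Hc Hg.
  apply (proj2 (@filterlim_locally nat (fct_UniformSpace R R_UniformSpace) eventually _ _ _)).
  intros eps.
  assert (HM : 0 <= M)
    by (apply Rle_trans with (Rabs (g 0%nat 0)); [apply Rabs_pos | apply Hg]).
  assert (Heps : 0 < eps / (M + 1)) by (apply Rdiv_lt_0_compat; [apply cond_pos | lra]).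
  assert (Hs : is_lim_seq (sum_n (fun m => Rabs (c m))) (Series (fun m => Rabs (c m))))
    by exact (Series_correct _ Hc).
  destruct (proj2 (is_lim_seq_spec _ _) Hs (mkposreal _ Heps)) as [N0 HN0].
  exists N0. intros N HN t. specialize (HN0 N HN). simpl in HN0.
  rewrite sum_n_Reals, Rabs_minus_sym in HN0.
  change (Rabs (sum_n (fun m => c m * g m t) N - Series (fun m => c m * g m t)) < eps).
  rewrite sum_n_Reals, Rabs_minus_sym.
  eapply Rle_lt_trans.
  { apply (Rabs_Series_sub_sum_le _ (fun m => Rabs (c m) * M)).
    - intros m. rewrite Rabs_mult. apply Rmult_le_compat_l; [apply Rabs_pos | apply Hg].
    - apply ex_series_scal_r, Hc. }
  rewrite Series_scal_r, <- scal_sum.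
  replace (_ * M - M * _)
    with (M * (Series (fun m => Rabs (c m)) - sum_f_R0 (fun m => Rabs (c m)) N)) by ring.
  apply Rle_lt_trans with (M * (eps / (M + 1))).
  - apply Rmult_le_compat_l; [exact HM |].
    apply Rle_trans with (1 := Rle_abs _). lra.
  - replace (M * (eps / (M + 1))) with (eps - eps / (M + 1)) by (field; lra). lra.
Qed.

Lemma is_RInt_sum_n (f : nat -> R -> R) (If : nat -> R) a b N :
  (forall m, is_RInt (f m) a b (If m)) ->
  is_RInt (fun t => sum_n (fun m => f m t) N) a b (sum_n If N).
Proof.
  intros Hf. induction N as [| N IH].
  - rewrite sum_O. apply (is_RInt_ext (f 0%nat)); [| apply Hf].
    intros; rewrite sum_O; reflexivity.
  - rewrite sum_Sn.
    apply (is_RInt_ext (fun t => plus (sum_n (fun m => f m t) N) (f (S N) t)));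
      [intros; rewrite sum_Sn; reflexivity |].
    exact (is_RInt_plus _ _ a b _ _ IH (Hf (S N))).
Qed.

Lemma is_RInt_Series (c : nat -> R) (g : nat -> R -> R) (J : nat -> R) a b M :
  a <= b -> ex_series (fun m => Rabs (c m)) ->
  (forall m t, a <= t <= b -> Rabs (g m t) <= M) ->
  (forall m, is_RInt (g m) a b (J m)) ->
  exists I, is_RInt (fun t => Series (fun m => c m * g m t)) a b I
            /\ is_series (fun m => c m * J m) I.
Proof.
  intros Hab Hc Hg HJ.
  (* [filterlim_RInt] needs uniform convergence on all of R: clamping the
     argument to [a, b] makes the bound global without changing the integrals. *)
  set (clamp := fun t => Rmax a (Rmin b t)).
  assert (Hclamp : forall t, a <= clamp t <= b)
    by (intros t; unfold clamp; split; [apply Rmax_l | apply Rmax_lub; [lra | apply Rmin_l]]).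
  assert (Hclamp_id : forall t, Rmin a b < t < Rmax a b -> clamp t = t).
  { intros t. rewrite Rmin_left, Rmax_right by lra. intros Ht. unfold clamp.
    rewrite Rmin_right, Rmax_right by lra. reflexivity. }
  destruct (filterlim_RInt (fun N t => sum_n (fun m => c m * g m (clamp t)) N) a b
              eventually eventually_filter (fun t => Series (fun m => c m * g m (clamp t)))
              (sum_n (fun m => c m * J m))) as [I [HI Hint]].
  - intros N. apply (is_RInt_sum_n (fun m t => c m * g m (clamp t))). intros m.
    apply (is_RInt_scal (fun t => g m (clamp t))).
    apply (is_RInt_ext (g m)); [| apply HJ].
    intros t Ht. rewrite Hclamp_id by exact Ht. reflexivity.
  - apply (filterlim_sum_n_uniform c (fun m t => g m (clamp t)) M Hc).
    intros m t. apply Hg, Hclamp.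
  - exists I. split; [| exact HI].
    apply (is_RInt_ext (fun t => Series (fun m => c m * g m (clamp t)))); [| exact Hint].
    intros t Ht. rewrite Hclamp_id by exact Ht. reflexivity.
Qed.

Lemma sum_f_R0_diag (F : nat -> nat -> R) K :
  sum_f_R0 (fun k => sum_f_R0 (fun n => F n (k - n)%nat) k) K
    = sum_f_R0 (fun n => sum_f_R0 (F n) (K - n)) K.
Proof.
  induction K as [| K IH]; [reflexivity |].
  rewrite !tech5, IH, Nat.sub_diag.
  rewrite (sum_eq (fun n => sum_f_R0 (F n) (S K - n))
                  (fun n => sum_f_R0 (F n) (K - n) + F n (S K - n)%nat))
    by (intros n Hn; replace (S K - n)%nat with (S (K - n)) by lia; reflexivity).
  rewrite plus_sum. simpl. ring.
Qed.

Lemma Rabs_sum_diag_sub_le (F : nat -> nat -> R) (U V : nat -> R) K :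
  ex_series V -> (forall n j, Rabs (F n j) <= U n * V j) ->
  Rabs (sum_f_R0 (fun k => sum_f_R0 (fun n => F n (k - n)%nat) k) K
        - sum_f_R0 (fun n => Series (F n)) K)
    <= Series V * sum_f_R0 U K
       - sum_f_R0 (fun k => sum_f_R0 (fun n => U n * V (k - n)%nat) k) K.
Proof.
  intros EV HF.
  pose proof (sum_f_R0_diag (fun n j => U n * V j) K) as HD. cbv beta in HD.
  rewrite HD, sum_f_R0_diag, <- minus_sum, (scal_sum U K), <- minus_sum.
  eapply Rle_trans; [apply sum_f_R0_triangle | apply sum_Rle].
  intros n _. rewrite Rabs_minus_sym, <- Series_scal_l.
  apply Rabs_Series_sub_sum_le; [apply HF | exact (ex_series_scal_l (U n) V EV)].
Qed.

Lemma is_series_diag (F : nat -> nat -> R) (U V : nat -> R) :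
  (forall n, 0 <= U n) -> (forall j, 0 <= V j) -> ex_series U -> ex_series V ->
  (forall n j, Rabs (F n j) <= U n * V j) ->
  is_series (fun k => sum_f_R0 (fun n => F n (k - n)%nat) k)
            (Series (fun n => Series (F n))).
Proof.
  intros HU HV EU EV HF.
  set (T := fun n => Series (F n)).
  assert (ET : ex_series T).
  { apply ex_series_Rabs, ex_series_Rabs_le with (fun n => U n * Series V);
      [| apply ex_series_scal_r, EU].
    intros n. unfold T. rewrite <- Series_scal_l.
    assert (EFn : ex_series (fun j => U n * V j)) by exact (ex_series_scal_l (U n) V EV).
    eapply Rle_trans; [apply Series_Rabs | apply Series_le]; auto.
    - apply ex_series_Rabs_le with (fun j => U n * V j); auto.
    - intros j; split; [apply Rabs_pos | apply HF]. }
  (* [w K] bounds the defect of [Rabs_sum_diag_sub_le]; it vanishes by the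
     Cauchy product theorem for [U] and [V]. *)
  set (w := fun K => Series V * sum_f_R0 U K
                     - sum_f_R0 (fun k => sum_f_R0 (fun n => U n * V (k - n)%nat) k) K).
  assert (Hw : is_lim_seq w 0).
  { replace 0 with (Series V * Series U - Series U * Series V) by ring.
    apply is_lim_seq_minus'.
    - apply (is_lim_seq_scal_l (sum_f_R0 U) (Series V) (Series U)).
      apply (is_lim_seq_ext (sum_n U)); [intros; apply sum_n_Reals |].
      exact (Series_correct U EU).
    - apply (is_lim_seq_ext (sum_n (fun k => sum_f_R0 (fun n => U n * V (k - n)%nat) k)));
        [intros; apply sum_n_Reals |].
      apply is_series_mult_pos; auto; apply Series_correct; auto. }
  set (e := fun K => sum_f_R0 (fun k => sum_f_R0 (fun n => F n (k - n)%nat) k) K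
                     - sum_f_R0 T K).
  change (is_lim_seq (sum_n (fun k => sum_f_R0 (fun n => F n (k - n)%nat) k)) (Series T)).
  apply (is_lim_seq_ext (fun K => sum_f_R0 T K + e K)).
  { intros K. rewrite sum_n_Reals. unfold e. ring. }
  rewrite <- (Rplus_0_r (Series T)). apply is_lim_seq_plus'.
  - apply (is_lim_seq_ext (sum_n T)); [intros; apply sum_n_Reals |].
    exact (Series_correct T ET).
  - apply is_lim_seq_le_le with (fun K => - w K) w; [| | exact Hw].
    + intros K. assert (He := Rabs_sum_diag_sub_le F U V K EV HF).
      change (Rabs (e K) <= w K) in He.
      pose proof (Rle_abs (e K)). pose proof (Rle_abs (- e K)). rewrite Rabs_Ropp in *. lra.
    + rewrite <- Ropp_0. apply (is_lim_seq_opp w 0), Hw.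
Qed.

Definition adiff (a : nat -> R) (j : nat) : R :=
  match j with O => a O | S i => a (S i) - a i end.

Lemma ext0_of_nat a j : ext0 a (Z.of_nat j) = a j.
Proof. unfold ext0. destruct (Z.ltb_spec (Z.of_nat j) 0); [lia |]. now rewrite Nat2Z.id. Qed.

Lemma ext0_neg a z : (z < 0)%Z -> ext0 a z = 0.
Proof. intros H. unfold ext0. destruct (Z.ltb_spec z 0); [reflexivity | lia]. Qed.

Lemma RL_adiff a k n : (n <= k)%nat -> RL a k n = adiff a (k - n).
Proof.
  intros H. unfold RL. rewrite <- Nat2Z.inj_sub by exact H.
  destruct (k - n)%nat as [| i]; simpl adiff.
  - rewrite ext0_of_nat, ext0_neg by lia. ring.
  - replace (Z.of_nat (S i) - 1)%Z with (Z.of_nat i) by lia.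
    rewrite !ext0_of_nat. reflexivity.
Qed.

Lemma RL_above_diag a k n : (k < n)%nat -> RL a k n = 0.
Proof. intros H. unfold RL. rewrite !ext0_neg by lia. ring. Qed.

Lemma is_series_finite_support (u : nat -> R) k :
  (forall n, (k < n)%nat -> u n = 0) -> is_series u (sum_f_R0 u k).
Proof.
  intros Hu. change (is_lim_seq (sum_n u) (sum_f_R0 u k)).
  apply is_lim_seq_ext_loc with (fun _ => sum_f_R0 u k); [| apply is_lim_seq_const].
  exists k. intros N HN. rewrite sum_n_Reals.
  induction HN as [| N HN IH]; [reflexivity |].
  rewrite tech5, <- IH, Hu by lia. ring.
Qed.

Lemma RLmul_sum a b k : RLmul a b k = sum_f_R0 (fun n => adiff a (k - n) * b n) k.
Proof.
  rewrite (sum_eq _ (fun n => RL a k n * b n)) by (intros; rewrite RL_adiff; auto).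
  apply is_series_unique, is_series_finite_support.
  intros n Hn. rewrite RL_above_diag by exact Hn. ring.
Qed.

Lemma ex_series_Rabs_adiff a :
  ex_series (fun m => Rabs (a m)) -> ex_series (fun j => Rabs (adiff a j)).
Proof.
  intros Ha.
  set (shift := fun j => match j with O => 0 | S i => Rabs (a i) end).
  apply ex_series_Rabs_le with (fun j => Rabs (a j) + shift j).
  - intros [| i]; simpl; [pose proof (Rabs_pos (a 0%nat)); lra |].
    unfold Rminus. rewrite <- (Rabs_Ropp (a i)). apply Rabs_triang.
  - apply (ex_series_plus (fun j => Rabs (a j))); [exact Ha |].
    apply ex_series_incr_1. exact Ha.
Qed.

Lemma Series_summation_by_parts (a w : nat -> R) B :
  ex_series (fun m => Rabs (a m)) -> (forall n, Rabs (w n) <= B) ->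
  Series (fun m => a m * (w m - w (S m))) = Series (fun j => adiff a j * w j).
Proof.
  intros Ha Hw.
  assert (E1 : ex_series (fun m => a m * w m))
    by (apply ex_series_Rabs, (ex_series_Rabs_mul_bounded a w B); auto).
  assert (E2 : ex_series (fun m => a m * w (S m)))
    by (apply ex_series_Rabs, (ex_series_Rabs_mul_bounded a (fun m => w (S m)) B); auto).
  assert (E3 : ex_series (fun i => a (S i) * w (S i)))
    by (apply (ex_series_incr_1 (fun m => a m * w m)), E1).
  rewrite (Series_ext _ (fun m => a m * w m - a m * w (S m))) by (intros; ring).
  rewrite Series_minus by assumption.
  rewrite (Series_incr_1 (fun j => adiff a j * w j)).
  2:{ apply ex_series_Rabs, (ex_series_Rabs_mul_bounded (adiff a) w B);
      auto using ex_series_Rabs_adiff. }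
  rewrite (Series_ext (fun i => adiff a (S i) * w (S i))
                      (fun i => a (S i) * w (S i) - a i * w (S i))) by (intros; simpl; ring).
  rewrite Series_minus, (Series_incr_1 (fun m => a m * w m)) by assumption.
  simpl. ring.
Qed.

Lemma Laguerre_series_bound a t x :
  ex_series (fun m => Rabs (a m)) -> 0 <= t <= x ->
  Rabs (Series (fun m => a m * Laguerre m t)) <= Series (fun m => Rabs (a m)) * exp x.
Proof.
  intros Ha Ht. rewrite <- Series_scal_r.
  eapply Rle_trans; [apply Series_Rabs |].
  { apply (ex_series_Rabs_mul_bounded a _ (exp x) Ha).
    intros m. apply Laguerre_bound_le, Ht. }
  apply Series_le; [| apply ex_series_scal_r, Ha].
  intros m. split; [apply Rabs_pos |]. rewrite Rabs_mult.
  apply Rmult_le_compat_l; [apply Rabs_pos | apply Laguerre_bound_le, Ht].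
Qed.

Lemma is_RInt_Laguerre_series_conv_Laguerre a n x :
  ex_series (fun m => Rabs (a m)) -> 0 <= x ->
  is_RInt (fun t => Series (fun m => a m * Laguerre m (x - t)) * Laguerre n t) 0 x
    (Series (fun m => a m * (Laguerre (m + n) x - Laguerre (S (m + n)) x))).
Proof.
  intros Ha Hx.
  destruct (is_RInt_Series a (fun m t => Laguerre m (x - t) * Laguerre n t)
              (fun m => Laguerre (m + n) x - Laguerre (S (m + n)) x) 0 x (exp x * exp x)
              Hx Ha) as [I [HI HS]].
  - intros m t Ht. rewrite Rabs_mult.
    apply Rmult_le_compat; try apply Rabs_pos; apply Laguerre_bound_le; lra.
  - intros m. rewrite <- RInt_Laguerre_conv.
    apply (RInt_correct (V := R_CompleteNormedModule)).
    apply ex_RInt_conv; apply continuous_Laguerre.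
  - rewrite (is_series_unique _ _ HS).
    apply (is_RInt_ext (fun t => Series (fun m => a m * (Laguerre m (x - t) * Laguerre n t))));
      [| exact HI].
    intros t _. rewrite <- Series_scal_r. apply Series_ext. intros m. ring.
Qed.

Lemma is_RInt_Laguerre_series_conv a b x :
  ex_series (fun m => Rabs (a m)) -> ex_series (fun n => Rabs (b n)) -> 0 <= x ->
  is_RInt (fun t => Series (fun m => a m * Laguerre m (x - t))
                    * Series (fun n => b n * Laguerre n t)) 0 x
    (Series (fun n => b n * Series (fun m =>
       a m * (Laguerre (m + n) x - Laguerre (S (m + n)) x)))).
Proof.
  intros Ha Hb Hx.
  destruct (is_RInt_Series b (fun n t => Series (fun m => a m * Laguerre m (x - t)) * Laguerre n t)
              (fun n => Series (fun m => a m * (Laguerre (m + n) x - Laguerre (S (m + n)) x)))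
              0 x ((Series (fun m => Rabs (a m)) * exp x) * exp x) Hx Hb)
    as [I [HI HS]]; [| intros n; apply is_RInt_Laguerre_series_conv_Laguerre; assumption |].
  - intros n t Ht. rewrite Rabs_mult.
    apply Rmult_le_compat; try apply Rabs_pos.
    + apply Laguerre_series_bound; [exact Ha | lra].
    + apply Laguerre_bound_le, Ht.
  - rewrite (is_series_unique _ _ HS).
    apply (is_RInt_ext (fun t => Series (fun n => b n *
             (Series (fun m => a m * Laguerre m (x - t)) * Laguerre n t)))); [| exact HI].
    intros t _. rewrite <- Series_scal_l. apply Series_ext. intros n. ring.
Qed.

Lemma is_series_RLmul_Laguerre a b x :
  ex_series (fun m => Rabs (a m)) -> ex_series (fun n => Rabs (b n)) -> 0 <= x ->
  is_series (fun k => RLmul a b k * Laguerre k x)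
    (Series (fun n => b n * Series (fun m =>
       a m * (Laguerre (m + n) x - Laguerre (S (m + n)) x)))).
Proof.
  intros Ha Hb Hx.
  assert (HL : forall k, Rabs (Laguerre k x) <= exp x)
    by (intros k; apply Laguerre_bound_le; lra).
  rewrite (Series_ext _ (fun n => Series (fun j => b n * (adiff a j * Laguerre (j + n) x)))).
  2:{ intros n. rewrite Series_scal_l. f_equal.
      apply (Series_summation_by_parts a (fun j => Laguerre (j + n) x) (exp x) Ha).
      intros j. apply HL. }
  apply (is_series_ext (fun k => sum_f_R0 (fun n =>
           b n * (adiff a (k - n) * Laguerre (k - n + n) x)) k)).
  { intros k. rewrite RLmul_sum, Rmult_comm, scal_sum. apply sum_eq. intros n Hn.
    replace (k - n + n)%nat with k by lia. ring. }
  apply (is_series_diag (fun n j => b n * (adiff a j * Laguerre (j + n) x))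
           (fun n => Rabs (b n) * exp x) (fun j => Rabs (adiff a j))).
  - intros n. apply Rmult_le_pos; [apply Rabs_pos | apply Rlt_le, exp_pos].
  - intros j. apply Rabs_pos.
  - apply ex_series_scal_r, Hb.
  - apply ex_series_Rabs_adiff, Ha.
  - intros n j. rewrite !Rabs_mult.
    replace (Rabs (b n) * exp x * Rabs (adiff a j))
      with (Rabs (b n) * (Rabs (adiff a j) * exp x)) by ring.
    apply Rmult_le_compat_l; [apply Rabs_pos |].
    apply Rmult_le_compat_l; [apply Rabs_pos | apply HL].
Qed.

Theorem theorem5p2 (a b : nat -> R)
  (ha : ex_series (fun m => Rabs (a m)))
  (hb : ex_series (fun n => Rabs (b n)))
  (x : R) (hx : 0 <= x) :
  ex_RInt (fun t => wLag a (x - t) * wLag b t) 0 x /\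
  ex_series (fun k => RLmul a b k * Laguerre k x) /\
  RInt (fun t => wLag a (x - t) * wLag b t) 0 x
    = exp (- x / 2) * Series (fun k => RLmul a b k * Laguerre k x).
Proof.
  assert (Hseries := is_series_RLmul_Laguerre a b x ha hb hx).
  assert (Hint : is_RInt (fun t => wLag a (x - t) * wLag b t) 0 x
                   (exp (- x / 2) * Series (fun k => RLmul a b k * Laguerre k x))).
  { rewrite (is_series_unique _ _ Hseries).
    apply (is_RInt_ext (fun t => exp (- x / 2) *
             (Series (fun m => a m * Laguerre m (x - t)) * Series (fun n => b n * Laguerre n t)))).
    - intros t _. unfold wLag. simpl.
      replace (exp (- x / 2)) with (exp (- (x - t) / 2) * exp (- t / 2))
        by (rewrite <- exp_plus; f_equal; field).
      ring.
    - exact (is_RInt_scal _ 0 x _ _ (is_RInt_Laguerre_series_conv a b x ha hb hx)). }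
  split; [eexists; exact Hint |]. split; [eexists; exact Hseries |].
  apply is_RInt_unique, Hint.
Qed.
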